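(* Let $\mathcal G=(\mathcal V,\mathcal E,w)$ be a finite, undirected, connected graph with $n$ vertices and positive edge weights, and let $Q=D+A$ be its signless Laplacian matrix. Let $w^*>0$ be a real number that is the weight of at least one $(m,k)$-star of $\mathcal G$. Let $\mathcal S_{w^*}$ be the set of all $(m,k)$-stars of $\mathcal G$ (as $m,k$ range over the positive integers with $m+k\le n$) whose weight is defined and equals $w^*$, and let $\deg(\mathcal S_{w^*})=\sum_{S_{m,k}\in\mathcal S_{w^*}}(m-1)$. Then $w^*$ is an eigenvalue of $Q$ with algebraic multiplicity at least $\deg(\mathcal S_{w^*})$.
   Context: Weighted adjacency matrix: $A_{ij}=w(i,j)$ if $\{i,j\}\in\mathcal E$ and $A_{ij}=0$ otherwise (no loops); $D=\mathrm{diag}(s(1),\dots,s(n))$ with strength $s(i)=\sum_jA_{ij}$. An $(m,k)$-star of $\mathcal G$, denoted $S_{m,k}$, is a pair $(\mathcal V_1,\mathcal V_2)$ of disjoint vertex sets with $|\mathcal V_1|=m\ge 2$, $|\mathcal V_2|=k$, such that every vertex of $\mathcal V_1$ is adjacent to every vertex of $\mathcal V_2$ and to no vertex outside $\mathcal V_2$; the sets are uniquely determined, i.e. $\mathcal V_1$ is the set of all vertices whose neighbourhood is exactly $\mathcal V_2$ (so distinct stars have disjoint $\mathcal V_1$). Its degree is $m-1$. Its weight is defined only when $w(i,j)=w(i',j)$ for all $i,i'\in\mathcal V_1$, $j\in\mathcal V_2$, and then equals $\sum_{j\in\mathcal V_2}w(i,j)$ for any $i\in\mathcal V_1$. *)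

From HB Require Import structures.
From mathcomp Require Import all_boot all_order all_algebra.
Set Implicit Arguments. Unset Strict Implicit. Unset Printing Implicit Defensive.
Import Order.TTheory GRing.Theory Num.Theory.
Local Open Scope ring_scope.

Section Graph.
Variables (R : realFieldType) (n : nat).
Variables (e : rel 'I_n) (w : 'I_n -> 'I_n -> R).

Definition adjmx : 'M[R]_n := \matrix_(i, j) (if e i j then w i j else 0).

Definition strength (i : 'I_n) : R := \sum_j adjmx i j.

Definition degmx : 'M[R]_n := \matrix_(i, j) ((i == j)%:R * strength i).

Definition signless_laplacian : 'M[R]_n := degmx + adjmx.

Definition nbhd (i : 'I_n) : {set 'I_n} := [set j | e i j].

(* A star is determined by its set V2 : V1 is the set of all vertices whose
   neighbourhood is exactly V2. *)
Definition star_V1 (V2 : {set 'I_n}) : {set 'I_n} := [set i | nbhd i == V2].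

(* (m,k)-star with m = #|V1| >= 2, k = #|V2| >= 1 *)
Definition is_star (V2 : {set 'I_n}) : bool :=
  (1 < #|star_V1 V2|)%N && (0 < #|V2|)%N.

Definition star_weight_defined (V2 : {set 'I_n}) : bool :=
  [forall i in star_V1 V2, forall i' in star_V1 V2, forall j in V2,
     w i j == w i' j].

Definition star_has_weight (V2 : {set 'I_n}) (c : R) : bool :=
  [&& is_star V2, star_weight_defined V2 &
      [forall i in star_V1 V2, \sum_(j in V2) w i j == c]].

Definition stars_of_weight (c : R) : {set {set 'I_n}} :=
  [set V2 | star_has_weight V2 c].

Definition stars_deg (c : R) : nat :=
  (\sum_(V2 in stars_of_weight c) (#|star_V1 V2| - 1))%N.

End Graph.

From HB Require Import structures.
From mathcomp Require Import all_boot all_order all_algebra.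
Set Implicit Arguments. Unset Strict Implicit. Unset Printing Implicit Defensive.
Import Order.TTheory GRing.Theory Num.Theory.
Local Open Scope ring_scope.

(* The vertices of the set V1 of a star are twins: they have the same
   neighbourhood V2, and when the star has weight w* they also have equal rows
   in A and strength w*.  Hence for twins x, y the vector e_x - e_y is a left
   eigenvector of Q = D + A for w*.  Fixing one representative per star, the
   m - 1 differences e_b - e_rep of every star of weight w* are rows of an
   invertible matrix P, and the rows of P (X - Q) belonging to them are
   divisible by X - w*; hence deg S_w* is at most the multiplicity of w*. *)

Section LeftEigenRows.
Variables (F : fieldType) (n : nat).

Lemma char_poly_dvd_of_left_eigenrows (A P : 'M[F]_n) (a : F) (B : {set 'I_n}) :
  P \in unitmx -> (forall i, i \in B -> row i P *m A = a *: row i P) ->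
  ('X - a%:P) ^+ #|B| %| char_poly A.
Proof.
move=> P_unit eigenP.
pose d : 'rV[{poly F}]_n := \row_i (if i \in B then 'X - a%:P else 1).
pose M := \matrix_(i, j) (if i \in B then (P i j)%:P
                          else (map_mx polyC P *m char_poly_mx A) i j).
have factor : map_mx polyC P *m char_poly_mx A = diag_mx d *m M.
  apply/row_matrixP => i.
  rewrite (row_mul i (diag_mx d)) row_diag_mx -scalemxAl -rowE mxE.
  case: ifPn => iB; last first.
    by rewrite scale1r; apply/rowP => j; rewrite !mxE (negPf iB).
  have -> : row i M = map_mx polyC (row i P) by apply/rowP => j; rewrite !mxE iB.
  rewrite row_mul -map_row /char_poly_mx mulmxBr mul_mx_scalar -map_mxM.
  by rewrite eigenP // map_mxZ scalerBl.
have detP_neq0 : \det P != 0 by rewrite -unitfE -unitmxE.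
have prod_d : \prod_i d 0 i = ('X - a%:P) ^+ #|B|.
  by rewrite -prodr_const [RHS]big_mkcond; apply: eq_bigr => i _; rewrite mxE.
have /(congr1 (fun p => (\det P)^-1%:P * p)) := congr1 determinant factor.
rewrite !det_mulmx det_map_mx det_diag prod_d mulrA -polyCM mulVf // mul1r.
rewrite -/(char_poly A).
by move=> ->; rewrite mulrCA dvdp_mulr.
Qed.

Definition pair_diff_mx (B : {set 'I_n}) (r : 'I_n -> 'I_n) : 'M[F]_n :=
  \matrix_(i, j) ((i == j)%:R - ((i \in B) && (j == r i))%:R).

Lemma row_pair_diff_mx (B : {set 'I_n}) r b :
  b \in B -> row b (pair_diff_mx B r) = 'e_b - 'e_(r b).
Proof. by move=> bB; apply/rowP => j; rewrite !mxE bB ![j == _]eq_sym. Qed.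

Lemma pair_diff_mx_unit (B : {set 'I_n}) r :
  (forall b, b \in B -> r b \notin B) -> pair_diff_mx B r \in unitmx.
Proof.
move=> rB.
pose N : 'M[F]_n := \matrix_(i, j) ((i \in B) && (j == r i))%:R.
have -> : pair_diff_mx B r = 1%:M - N by apply/matrixP => i j; rewrite !mxE.
have NN : N *m N = 0.
  apply/matrixP => i j; rewrite !mxE; apply: big1 => k _; rewrite !mxE.
  have [iB|] := boolP (i \in B); last by rewrite mul0r.
  by have [->|] := eqVneq k (r i); rewrite ?mul0r // (negPf (rB i iB)) mulr0.
have [] // := @mulmx1_unit _ _ (1%:M - N) (1%:M + N).
by rewrite mulmxDr mulmx1 !mulmxBl mul1mx NN subr0 subrK.
Qed.

End LeftEigenRows.

Section Twins.
Variables (R : realFieldType) (n : nat) (e : rel 'I_n) (w : 'I_n -> 'I_n -> R).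

Local Notation nbhd := (nbhd e).
Local Notation star_V1 := (star_V1 e).
Local Notation Q := (signless_laplacian e w).

Definition twin_rep (b : 'I_n) : 'I_n := odflt b [pick x in star_V1 (nbhd b)].

Lemma mem_star_V1_nbhd b : b \in star_V1 (nbhd b).
Proof. by rewrite inE. Qed.

Lemma pick_star_V1_nbhd b : [pick x in star_V1 (nbhd b)] = Some (twin_rep b).
Proof. by rewrite /twin_rep; case: pickP => // /(_ b); rewrite mem_star_V1_nbhd. Qed.

Lemma nbhd_twin_rep b : nbhd (twin_rep b) = nbhd b.
Proof.
rewrite /twin_rep; case: pickP => [x|//].
by rewrite inE => /eqP.
Qed.

Lemma eq_twin_rep b b' : nbhd b = nbhd b' -> twin_rep b = twin_rep b'.
Proof. by move=> nbhd_bb'; apply: Some_inj; rewrite -!pick_star_V1_nbhd nbhd_bb'. Qed.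

Lemma twin_rep_id b : twin_rep (twin_rep b) = twin_rep b.
Proof. exact/eq_twin_rep/nbhd_twin_rep. Qed.

Lemma strength_star_V1 V2 c x :
  star_has_weight e w V2 c -> x \in star_V1 V2 -> strength e w x = c.
Proof.
case/and3P=> _ _ /forall_inP sumV2 xV1; rewrite -(eqP (sumV2 x xV1)) /strength.
under eq_bigr do rewrite mxE.
rewrite -big_mkcond; apply: eq_bigl => j.
by move: xV1; rewrite inE => /eqP <-; rewrite inE.
Qed.

Lemma row_degmx x : row x (degmx e w) = strength e w x *: 'e_x.
Proof. by apply/rowP => j; rewrite !mxE eq_sym mulrC. Qed.

Lemma row_adjmx_star_V1 V2 x y :
  star_weight_defined e w V2 -> x \in star_V1 V2 -> y \in star_V1 V2 ->
  row x (adjmx e w) = row y (adjmx e w).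
Proof.
move=> /forall_inP wdef xV1 yV1; apply/rowP => j; rewrite !mxE.
have nbhd_xy : nbhd x = nbhd y by move: xV1 yV1; rewrite !inE => /eqP -> /eqP.
have -> : e y j = e x j by move/setP/(_ j): nbhd_xy; rewrite !inE.
case: ifP => // exj.
have jV2 : j \in V2 by move: xV1; rewrite inE => /eqP <-; rewrite inE.
by move/forall_inP/(_ y yV1)/forall_inP/(_ j jV2)/eqP: (wdef x xV1).
Qed.

Lemma star_twins_left_eigen V2 c x y :
  star_has_weight e w V2 c -> x \in star_V1 V2 -> y \in star_V1 V2 ->
  ('e_x - 'e_y) *m Q = c *: ('e_x - 'e_y : 'rV_n).
Proof.
move=> hV2 xV1 yV1; have /and3P[_ wdef _] := hV2.
rewrite mulmxBl -!rowE !linearD /= (row_adjmx_star_V1 wdef xV1 yV1) !row_degmx.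
rewrite (strength_star_V1 hV2 xV1) (strength_star_V1 hV2 yV1).
by rewrite addrACA subrr addr0 scalerN.
Qed.

Definition star_nonreps (c : R) : {set 'I_n} :=
  [set b | star_has_weight e w (nbhd b) c & b != twin_rep b].

Lemma twin_rep_notin_star_nonreps c b :
  b \in star_nonreps c -> twin_rep b \notin star_nonreps c.
Proof. by rewrite !inE nbhd_twin_rep twin_rep_id eqxx andbF. Qed.

Lemma star_nonreps_left_eigen c b :
  b \in star_nonreps c ->
  ('e_b - 'e_(twin_rep b)) *m Q = c *: ('e_b - 'e_(twin_rep b) : 'rV_n).
Proof.
rewrite inE => /andP[hV2 _]; apply: star_twins_left_eigen hV2 _ _.
  exact: mem_star_V1_nbhd.
by rewrite inE nbhd_twin_rep.
Qed.

Lemma card_star_nonreps c : #|star_nonreps c| = stars_deg e w c.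
Proof.
rewrite /stars_deg -sum1_card.
rewrite (partition_big nbhd (mem (stars_of_weight e w c))); last first.
  by move=> b; rewrite !inE => /andP[].
apply: eq_bigr => V2 /[!inE] hV2; rewrite sum1_card.
have [x xV1] : exists x, x \in star_V1 V2.
  case/and3P: hV2 => /andP[V1_gt1 _] _ _.
  by case/card_gt0P: (ltnW V1_gt1) => x; exists x.
have nbhd_x : nbhd x = V2 by move: xV1; rewrite inE => /eqP.
rewrite -{2}nbhd_x (cardsD1 (twin_rep x)) inE nbhd_twin_rep eqxx add1n subn1 /=.
apply: eq_card => b; rewrite !inE -topredE /= !inE -nbhd_x.
have [nbhd_b|] := eqVneq (nbhd b) (nbhd x); last by rewrite !andbF.
by rewrite nbhd_b nbhd_x hV2 (eq_twin_rep nbhd_b) andbT.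
Qed.

Lemma stars_deg_gt0 c :
  (exists V2, star_has_weight e w V2 c) -> (0 < stars_deg e w c)%N.
Proof.
case=> V2 hV2; rewrite /stars_deg (bigD1 V2) ?inE //=.
case/and3P: hV2 => /andP[V1_gt1 _] _ _.
by rewrite (leq_trans _ (leq_addr _ _)) // subn_gt0.
Qed.

Lemma XsubC_stars_deg_dvd_char_poly c :
  ('X - c%:P) ^+ stars_deg e w c %| char_poly Q.
Proof.
rewrite -card_star_nonreps.
have P_unit := @pair_diff_mx_unit R _ _ _ (@twin_rep_notin_star_nonreps c).
apply: (char_poly_dvd_of_left_eigenrows P_unit).
by move=> b hb; rewrite row_pair_diff_mx // (star_nonreps_left_eigen hb).
Qed.

End Twins.

Theorem corollary1 (R : realFieldType) (n : nat) (e : rel 'I_n)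
    (w : 'I_n -> 'I_n -> R)
    (e_sym : symmetric e) (e_irr : irreflexive e)
    (w_sym : forall i j, w i j = w j i)
    (w_pos : forall i j, e i j -> 0 < w i j)
    (connected : forall i j, connect e i j)
    (wstar : R) (wstar_pos : 0 < wstar)
    (hstar : exists V2 : {set 'I_n}, star_has_weight e w V2 wstar) :
  eigenvalue (signless_laplacian e w) wstar /\
  (stars_deg e w wstar <= mup wstar (char_poly (signless_laplacian e w)))%N.
Proof.
have charQ_neq0 := monic_neq0 (char_poly_monic (signless_laplacian e w)).
have deg_le_mup :
    (stars_deg e w wstar <= mup wstar (char_poly (signless_laplacian e w)))%N.
  by rewrite mup_geq // XsubC_stars_deg_dvd_char_poly.
split=> //; rewrite eigenvalue_root_char.
by apply: contraLR (leq_trans (stars_deg_gt0 hstar) deg_le_mup) => /mupNroot ->.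
Qed.
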